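(* Let $m,n\geq 0$ be integers. Then \[ \sum_{k=1}^{n}\frac{(-1)^k q^{mk+\binom{k+1}{2}}}{(q;q)_k (q;q)_{n-k}(q^k;q)_{m+1}} -\sum_{k=1}^{m}\frac{(-1)^k q^{nk+\binom{k+1}{2}}}{(q;q)_k (q;q)_{m-k}(q^k;q)_{n+1}} =\frac{1}{(q;q)_{m}(q;q)_{n}}\left(\sum_{k=1}^m\frac{q^k}{1-q^k}-\sum_{k=1}^n\frac{q^k}{1-q^k}\right). \]
   Context: For $N\geq 0$, $(x;q)_N=(1-x)(1-xq)\cdots(1-xq^{N-1})$ (with $(x;q)_0=1$). The identity is one of rational functions in $q$. *)

From HB Require Import structures.
From mathcomp Require Import all_boot all_order all_algebra.
Set Implicit Arguments. Unset Strict Implicit. Unset Printing Implicit Defensive.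
Import Order.TTheory GRing.Theory Num.Theory.
Local Open Scope ring_scope.

Definition qpoch (R : comRingType) (x q : R) (N : nat) : R :=
  \prod_(i < N) (1 - x * q ^+ i).

Definition RatFun := {fraction {poly rat}}.
Definition qv : RatFun := tofrac ('X : {poly rat}).

(* Write S(m,n) for the first sum and H_k = \sum_(1 <= i <= k) q^i/(1-q^i).
   The q-Pascal rule expresses (1 - q^(n+1)) S(m,n+1) through S(m,n) and a
   shifted sum whose terms are, one by one, combinations of the terms of
   S(m,n) and S(m+1,n).  Induction on n, for all m simultaneously, yields
   (q;q)_m (q;q)_n S(m,n) = H_m - H_(m+n); subtracting the same identity for
   (n,m) cancels H_(m+n).  This works in any field where q is not a root of
   unity. *)

From mathcomp Require Import all_boot all_algebra ring zify.
Set Implicit Arguments. Unset Strict Implicit. Unset Printing Implicit Defensive.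
Import GRing.Theory.
Local Open Scope ring_scope.

Lemma qpochS (R : comNzRingType) (x q : R) N :
  qpoch x q N.+1 = qpoch x q N * (1 - x * q ^+ N).
Proof. by rewrite /qpoch big_ord_recr. Qed.

Lemma qpoch0 (R : comNzRingType) (x q : R) : qpoch x q 0 = 1.
Proof. by rewrite /qpoch big_ord0. Qed.

Lemma qpochXE (R : comNzRingType) (q : R) j N :
  qpoch (q ^+ j) q N = \prod_(i < N) (1 - q ^+ (j + i)).
Proof. by apply: eq_bigr => i _; rewrite exprD. Qed.

Lemma qpochXSl (R : comNzRingType) (q : R) j N :
  qpoch (q ^+ j) q N.+1 = (1 - q ^+ j) * qpoch (q ^+ j.+1) q N.
Proof.
rewrite qpochXE big_ord_recl addn0; congr (_ * _).
by rewrite qpochXE; apply: eq_bigr => i _; rewrite /bump /= addSnnS.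
Qed.

Section QSum.
Variables (F : fieldType) (q : F).

Local Notation qfac N := (qpoch q q N).

Definition qterm m n k :=
  (-1) ^+ k * q ^+ (m * k + 'C(k.+1, 2))
    / (qfac k * qfac (n - k) * qpoch (q ^+ k) q m.+1).

Definition qsum m n := \sum_(1 <= k < n.+1) qterm m n k.

Definition qharm k := \sum_(1 <= i < k.+1) q ^+ i / (1 - q ^+ i).

(* The part of [(1 - q ^+ n.+1) * qterm m n.+1 j.+1] split off by the q-Pascal rule. *)
Definition qpascal_term m n j :=
  q ^+ (n - j) * ((-1) ^+ j.+1 * q ^+ (m * j.+1 + 'C(j.+2, 2))
    / (qfac j * qfac (n - j) * qpoch (q ^+ j.+1) q m.+1)).

Lemma qfacS N : qfac N.+1 = qfac N * (1 - q ^+ N.+1).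
Proof. by rewrite qpochS exprS. Qed.

Lemma qharmS k : qharm k.+1 = qharm k + q ^+ k.+1 / (1 - q ^+ k.+1).
Proof. exact: big_nat_recr. Qed.

Hypothesis q_not_root_of_unity : forall i, (0 < i)%N -> q ^+ i != 1.

Lemma subr1qX_neq0 i : (0 < i)%N -> 1 - q ^+ i != 0.
Proof. by move=> i_gt0; rewrite subr_eq0 eq_sym q_not_root_of_unity. Qed.

Lemma qpochX_neq0 j N : (0 < j)%N -> qpoch (q ^+ j) q N != 0.
Proof.
by move=> j_gt0; rewrite qpochXE; apply/prodf_neq0 => i _; apply: subr1qX_neq0; lia.
Qed.

Lemma qfac_neq0 N : qfac N != 0.
Proof. by rewrite -[q in qpoch q]expr1 qpochX_neq0. Qed.

Lemma qterm_pascal m n j : (j < n)%N ->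
  (1 - q ^+ n.+1) * qterm m n.+1 j.+1 = qterm m n j.+1 + qpascal_term m n j.
Proof.
move=> /subnKC; move: (n - j.+1)%N => a <-.
rewrite /qterm /qpascal_term.
have -> : ((j.+1 + a).+1 - j.+1 = a.+1)%N by lia.
have -> : ((j.+1 + a) - j.+1 = a)%N by lia.
have -> : ((j.+1 + a) - j = a.+1)%N by lia.
rewrite !qfacS.
have := qpochX_neq0 m.+1 (ltn0Sn j).
have := subr1qX_neq0 (ltn0Sn j); have := subr1qX_neq0 (ltn0Sn a).
have := subr1qX_neq0 (ltn0Sn (j + a).+1).
have := qfac_neq0 j; have := qfac_neq0 a.
rewrite !exprS !exprD => ? ? ? ? ? ?.
by field; apply/and5P; split.
Qed.

Lemma qterm_pascal_last m n :
  (1 - q ^+ n.+1) * qterm m n.+1 n.+1 = qpascal_term m n n.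
Proof.
rewrite /qterm /qpascal_term !subnn qpoch0 expr0 qfacS.
have := qpochX_neq0 m.+1 (ltn0Sn n); have := subr1qX_neq0 (ltn0Sn n).
have := qfac_neq0 n => ? ? ?.
by field; apply/and3P; split.
Qed.

Lemma qpascal_term0 m n :
  qpascal_term m n 0 = - q ^+ (m + n).+1 / (qfac m.+1 * qfac n).
Proof.
rewrite /qpascal_term subn0 qpoch0 expr1 muln1 addn1 -addSn exprD.
have := qfac_neq0 n; have := qfac_neq0 m.+1 => ? ?.
by field; apply/andP; split.
Qed.

Lemma qpascal_termS m n j : (j < n)%N ->
  qpascal_term m n j.+1 =
  - q ^+ (m + n).+1 * (qterm m n j.+1 - (1 - q ^+ m.+1) * qterm m.+1 n j.+1).
Proof.
move=> /subnKC; move: (n - j.+1)%N => a <-.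
rewrite /qterm /qpascal_term.
have -> : ((j.+1 + a) - j.+1 = a)%N by lia.
have -> : (m * j.+2 + 'C(j.+3, 2) = (m * j.+1 + 'C(j.+2, 2)) + m + j.+2)%N.
  by rewrite [in LHS]binS bin1 [(m * j.+2)%N]mulnS; lia.
have -> : (m.+1 * j.+1 + 'C(j.+2, 2) = (m * j.+1 + 'C(j.+2, 2)) + j.+1)%N.
  by rewrite mulSn; lia.
move: (m * j.+1 + 'C(j.+2, 2))%N => e.
rewrite (qpochXSl q j.+1 m) (qpochXSl q j.+1 m.+1) (qpochS _ _ m) qfacS.
have := qpochX_neq0 m (ltn0Sn j.+1); have := subr1qX_neq0 (ltn0Sn j).
have : 1 - q ^+ j.+2 * q ^+ m != 0 by rewrite -exprD subr1qX_neq0.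
have := qfac_neq0 j; have := qfac_neq0 a; have := subr1qX_neq0 (ltn0Sn j.+1).
rewrite !exprS !exprD !exprS => ? ? ? ? ? ?.
by field; apply/and5P; split.
Qed.

Lemma qsum_ord m n : qsum m n = \sum_(j < n) qterm m n j.+1.
Proof. by rewrite /qsum big_add1 big_mkord. Qed.

Lemma qsumS m n :
  (1 - q ^+ n.+1) * qsum m n.+1 =
  qsum m n - q ^+ (m + n).+1 *
    ((qfac m.+1 * qfac n)^-1 + qsum m n - (1 - q ^+ m.+1) * qsum m.+1 n).
Proof.
rewrite !qsum_ord big_ord_recr /= mulrDr mulr_sumr.
rewrite (eq_bigr (fun j : 'I_n => qterm m n j.+1 + qpascal_term m n j)); last first.
  by move=> j _; apply: qterm_pascal.
have shift_pascal : \sum_(j < n) qpascal_term m n j + qpascal_term m n n =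
    qpascal_term m n 0 + \sum_(j < n) qpascal_term m n j.+1.
  by rewrite -(big_ord_recr n (fun j : 'I_n.+1 => qpascal_term m n j)) big_ord_recl.
rewrite big_split /= qterm_pascal_last -addrA shift_pascal qpascal_term0.
rewrite [\sum_(j < n) qpascal_term m n j.+1](eq_bigr (fun j : 'I_n =>
  - q ^+ (m + n).+1 * (qterm m n j.+1 - (1 - q ^+ m.+1) * qterm m.+1 n j.+1))); last first.
  by move=> j _; apply: qpascal_termS.
rewrite -mulr_sumr sumrB -mulr_sumr.
have := qfac_neq0 n; have := qfac_neq0 m.+1 => ? ?.
by field; apply/andP; split.
Qed.

Lemma qsumE m n : qsum m n = (qharm m - qharm (m + n)) / (qfac m * qfac n).
Proof.
elim: n m => [|n IHn] m.
  by rewrite /qsum big_geq // addn0 subrr mul0r.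
apply: (mulfI (subr1qX_neq0 (ltn0Sn n))).
rewrite qsumS !IHn addSn addnS !qharmS.
move: (qharm m) (qharm (m + n)) => Hm Hmn.
have := subr1qX_neq0 (ltn0Sn m); have := subr1qX_neq0 (ltn0Sn (m + n)).
have := subr1qX_neq0 (ltn0Sn n); have := qfac_neq0 n; have := qfac_neq0 m.
rewrite !qfacS => ? ? ? ? ?.
by field; apply/and5P; split.
Qed.

Lemma qsum_sub m n :
  qsum m n - qsum n m = (qfac m * qfac n)^-1 * (qharm m - qharm n).
Proof.
rewrite !qsumE addnC.
have := qfac_neq0 m; have := qfac_neq0 n => ? ?.
by field; apply/andP; split.
Qed.

End QSum.

Lemma qv_not_root_of_unity i : (0 < i)%N -> qv ^+ i != 1.
Proof.
move=> i_gt0; rewrite /qv -tofracXn -tofrac1 tofrac_eq.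
by apply/negP => /eqP/(congr1 (size : {poly rat} -> nat)); rewrite size_polyXn size_poly1; lia.
Qed.

Theorem corollary6p4 (m n : nat) :
  \sum_(1 <= k < n.+1)
     ((-1) ^+ k * qv ^+ (m * k + 'C(k.+1, 2))
      / (qpoch qv qv k * qpoch qv qv (n - k) * qpoch (qv ^+ k) qv m.+1))
  - \sum_(1 <= k < m.+1)
     ((-1) ^+ k * qv ^+ (n * k + 'C(k.+1, 2))
      / (qpoch qv qv k * qpoch qv qv (m - k) * qpoch (qv ^+ k) qv n.+1))
  = (qpoch qv qv m * qpoch qv qv n)^-1
    * (\sum_(1 <= k < m.+1) (qv ^+ k / (1 - qv ^+ k))
       - \sum_(1 <= k < n.+1) (qv ^+ k / (1 - qv ^+ k))).
Proof.
rewrite -/(qsum qv m n) -/(qsum qv n m) -/(qharm qv m) -/(qharm qv n).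
exact: (qsum_sub qv_not_root_of_unity m n).
Qed.
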